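(* Let $G$ be a group with subgroups $H,J$ such that $H\neq G$, $|J:H\cap J|=2$, $|H:H\cap J|$ is finite and $H\cap J$ is core-free in $G$, and let $\Gamma=\mathrm{Cos}(G,H,J)$. Let $g\in J\setminus(H\cap J)$ and $L=(H\cap H^g)\langle g\rangle$. Then $J\le L$, $\Gamma$ has constant edge-multiplicity $|L:J|$, and the base graph of $\Gamma$ is isomorphic to $\mathrm{Cos}(G,H,L)$, which is isomorphic to $\mathrm{SimpCos}(G,H,HgH)$. In particular $\Gamma$ is simple if and only if $J=(H\cap H^g)\langle g\rangle$, and in that case $\Gamma\cong\mathrm{SimpCos}(G,H,HgH)$.
   Context: A graph is a triple $(V,E,\mathbf I)$ with $\mathbf I\subseteq V\times E$ such that every edge is incident with exactly two distinct vertices (multiple edges allowed, no loops). It has edge-multiplicity $\lambda$ if every pair of adjacent vertices is incident with exactly $\lambda$ common edges; it is simple if $\lambda=1$. The base graph of a graph with constant edge-multiplicity is the simple graph on the same vertex set whose edges are the unordered pairs of adjacent vertices. Coset graph: for a group $G$ and subgroups $H,J$ with $H\ne G$, $|J:H\cap J|=2$, $|H:H\cap J|$ finite, $\mathrm{Cos}(G,H,J)$ has vertex set $\{Hx:x\in G\}$, edge set $\{Jy:y\in G\}$, and $Hx$ incident with $Jy$ iff $yx^{-1}\in JH$. $\mathrm{SimpCos}(G,H,HgH)$ is the simple graph with vertex set $\{Hx:x\in G\}$ in which $\{Hx,Hy\}$ is an edge iff $yx^{-1}\in HgH$. *)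

(* Groups are (possibly infinite) MathComp [groupType]s
   from mathcomp/boot/monoid.v; subsets of a group are Prop-valued
   predicates [T -> Prop]. *)
From mathcomp Require Import all_boot.
From mathcomp Require Import monoid.

Set Implicit Arguments.
Unset Strict Implicit.
Unset Printing Implicit Defensive.

Local Open Scope group_scope.

Section GroupDefs.
Variable T : groupType.
Implicit Types (H J K M : T -> Prop) (x y g : T).

Definition is_subgroup H : Prop :=
  H 1 /\ (forall x y, H x -> H y -> H (x * y)) /\ (forall x, H x -> H x^-1).

Definition subset_of H J : Prop := forall x, H x -> J x.
Definition pcap H J : T -> Prop := fun x => H x /\ J x.

Definition rcoset H x : T -> Prop := fun z => exists2 h, H h & z = h * x.

Definition conj_set H g : T -> Prop := fun z => exists2 h, H h & z = h ^ g.

Definition prod_set H K : T -> Prop :=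
  fun z => exists h, exists k, [/\ H h, K k & z = h * k].

Definition dcoset H g : T -> Prop :=
  fun z => exists h1, exists h2, [/\ H h1, H h2 & z = h1 * g * h2].

Definition cycle_set g : T -> Prop :=
  fun z => exists n : nat, z = g ^+ n \/ z = g ^- n.

Definition rcosets_in M K : Type :=
  {A : T -> Prop | exists2 x, M x & A = rcoset K x}.

Definition index_is M K (n : nat) : Prop :=
  exists f : rcosets_in M K -> 'I_n, bijective f.

Definition core_free K : Prop :=
  forall x, (forall y, conj_set K y x) -> x = 1.

End GroupDefs.

Record graph := Graph {
  vtx : Type;
  edg : Type;
  inc : vtx -> edg -> Prop
}.

Definition adjacent (G : graph) (u v : vtx G) : Prop :=
  u <> v /\ exists e, inc u e /\ inc v e.

Definition common_edges (G : graph) (u v : vtx G) : Type :=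
  {e : edg G | inc u e /\ inc v e}.

Definition edge_multiplicity (G : graph) (lam : nat) : Prop :=
  forall u v : vtx G, adjacent u v ->
    exists f : common_edges u v -> 'I_lam, bijective f.

Definition simple_graph (G : graph) : Prop := edge_multiplicity G 1.

Definition simple_graph_of (V : Type) (adj : V -> V -> Prop) : graph :=
  @Graph V
    {p : V -> Prop | exists u v, [/\ u <> v, adj u v &
                                  p = (fun w => w = u \/ w = v)]}
    (fun w e => sval e w).

Definition base_graph (G : graph) : graph :=
  simple_graph_of (@adjacent G).

Definition graph_iso (G1 G2 : graph) : Prop :=
  exists (f : vtx G1 -> vtx G2) (h : edg G1 -> edg G2),
    [/\ bijective f, bijective h &
        forall v e, inc v e <-> inc (f v) (h e)].

Section CosetGraphs.
Variable T : groupType.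
Local Open Scope group_scope.

Definition cos_vtx (H : T -> Prop) : Type :=
  {A : T -> Prop | exists x, A = rcoset H x}.

Definition Cos (H J : T -> Prop) : graph :=
  @Graph (cos_vtx H) (cos_vtx J)
    (fun A B => exists x, exists y,
       [/\ sval A = rcoset H x, sval B = rcoset J y &
           prod_set J H (y * x^-1)]).

Definition SimpCos (H : T -> Prop) (g : T) : graph :=
  simple_graph_of (fun A B : cos_vtx H => exists x, exists y,
       [/\ sval A = rcoset H x, sval B = rcoset H y &
           dcoset H g (y * x^-1)]).

End CosetGraphs.

From mathcomp Require Import all_boot.
From mathcomp Require Import monoid.
From Stdlib Require Import ClassicalEpsilon FunctionalExtensionality
  PropExtensionality ProofIrrelevance.

Set Implicit Arguments.
Unset Strict Implicit.
Unset Printing Implicit Defensive.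

Local Open Scope group_scope.

(* Since |J : H ∩ J| = 2 and g ∈ J \ H, we have J ⊆ H ∪ Hg and g^2 ∈ H ∩ J ⊆ H ∩ H^g.
   Hence the edge Jy of Cos(G, H, J) is incident with exactly Hy and Hgy, and
   L = (H ∩ H^g) ∪ (H ∩ H^g) g is a subgroup containing J.  The edges Jy joining Hz
   and Hgz are those with z y^-1 ∈ L, so they correspond to the cosets of J in L: the
   multiplicity is |L : J|, and merging parallel edges amounts to replacing J by L.
   Finally the pairs {Hy, Hgy} are exactly the pairs {Hx, H h g h' x}, i.e. the
   edges of SimpCos(G, H, HgH). *)

Lemma pred_ext (A : Type) (P Q : A -> Prop) : (forall x, P x <-> Q x) -> P = Q.
Proof.
by move=> PQ; apply: functional_extensionality => x; apply: propositional_extensionality.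
Qed.

Lemma sig_ext (A : Type) (P : A -> Prop) (a b : {x | P x}) : sval a = sval b -> a = b.
Proof. by case: a b => [a pa] [b pb] /= eab; subst b; rewrite (proof_irrelevance _ pa pb). Qed.

Lemma rel_choice (A B : Type) (R : A -> B -> Prop) :
  (forall a, exists b, R a b) -> exists f : A -> B, forall a, R a (f a).
Proof.
move=> totR; exists (fun a => sval (constructive_indefinite_description _ (totR a))).
by move=> a; case: constructive_indefinite_description.
Qed.

Lemma functional_rel_bijective (A B : Type) (R : A -> B -> Prop) :
  (forall a, exists b, R a b) -> (forall b, exists a, R a b) ->
  (forall a a' b, R a b -> R a' b -> a = a') ->
  (forall a b b', R a b -> R a b' -> b = b') ->
  exists2 f : A -> B, bijective f & forall a, R a (f a).
Proof.
move=> totR surR injR funR.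
have [f Rf] := rel_choice totR.
have [f' Rf'] := rel_choice (R := fun b a => R a b) surR.
exists f => //; exists f' => [a | b]; [exact: injR (Rf' _) (Rf a) | exact: funR (Rf _) (Rf' b)].
Qed.

Lemma ord_bijective_of_injective (A : Type) n (f : A -> 'I_n) :
  injective f -> exists m, exists h : A -> 'I_m, bijective h.
Proof.
move=> injf.
pose P : {pred 'I_n} :=
  fun i => if excluded_middle_informative (exists a, f a = i) then true else false.
have PP i : i \in P <-> exists a, f a = i.
  by rewrite unfold_in /P; case: excluded_middle_informative.
have Pf a : f a \in P by apply/PP; exists a.
have [g fg] : exists g : 'I_#|P| -> A, forall i, f (g i) = enum_val i.
  by apply: (rel_choice (R := fun i a => f a = enum_val i)) => i; apply/PP; have := enum_valP i.
exists #|P|, (fun a => enum_rank_in (Pf a) (f a)), g => [a | i].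
- by apply: injf; rewrite fg enum_rankK_in ?Pf.
- by apply: enum_val_inj; rewrite enum_rankK_in ?Pf // fg.
Qed.

Definition inc_ext (G : graph) : Prop :=
  forall e1 e2 : edg G, (forall v, inc v e1 <-> inc v e2) -> e1 = e2.

Lemma simple_graph_of_inc_ext (V : Type) (adj : V -> V -> Prop) :
  inc_ext (simple_graph_of adj).
Proof. by move=> e1 e2 e12; apply: sig_ext; apply: pred_ext. Qed.

Lemma graph_iso_of_inc_ext (G1 G2 : graph) (f : vtx G1 -> vtx G2) :
  bijective f -> inc_ext G1 -> inc_ext G2 ->
  (forall e1, exists e2, forall v, inc v e1 <-> inc (f v) e2) ->
  (forall e2, exists e1, forall v, inc v e1 <-> inc (f v) e2) ->
  graph_iso G1 G2.
Proof.
move=> [f' fK f'K] ext1 ext2 tot sur.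
have injR e1 e1' e2 : (forall v, inc v e1 <-> inc (f v) e2) ->
    (forall v, inc v e1' <-> inc (f v) e2) -> e1 = e1'.
  by move=> R R'; apply: ext1 => v; rewrite R R'.
have funR e1 e2 e2' : (forall v, inc v e1 <-> inc (f v) e2) ->
    (forall v, inc v e1 <-> inc (f v) e2') -> e2 = e2'.
  by move=> R R'; apply: ext2 => w; rewrite -(f'K w) -R R'.
have [h bh Rh] := functional_rel_bijective tot sur injR funR.
by exists f, h; split => //; exists f'.
Qed.

Ltac gsimpl := repeat (rewrite ?invgM ?invgK; first [rewrite mulgA | rewrite mulgK
  | rewrite mulgVK | rewrite mulVg | rewrite mulgV | rewrite mul1g | rewrite mulg1
  | rewrite invg1]); rewrite ?invgM ?invgK.

Section Subgroups.
Variables (T : groupType) (K : T -> Prop).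
Hypothesis sK : is_subgroup K.

Lemma subgroup1 : K 1. Proof. by case: sK. Qed.
Lemma subgroupM a b : K a -> K b -> K (a * b). Proof. by case: sK => _ [+ _]; apply. Qed.
Lemma subgroupV a : K a -> K a^-1. Proof. by case: sK => _ [_]; apply. Qed.
Lemma subgroupVr a : K a^-1 -> K a. Proof. by move/subgroupV; rewrite invgK. Qed.

Lemma rcoset_eq a b : rcoset K a = rcoset K b <-> K (a * b^-1).
Proof.
split=> [eab | Kab].
- have : rcoset K a a by exists 1; rewrite ?mul1g //; apply: subgroup1.
  by rewrite eab => -[k Kk ->]; rewrite mulgK.
- apply: pred_ext => z; split=> -[k Kk ->].
  + by exists (k * (a * b^-1)); [apply: subgroupM | gsimpl].
  + by exists (k * (a * b^-1)^-1); [apply/subgroupM/subgroupV | gsimpl].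
Qed.

Definition vcoset (x : T) : cos_vtx K := exist _ (rcoset K x) (ex_intro _ x erefl).

Lemma vcoset_surj (A : cos_vtx K) : exists x, A = vcoset x.
Proof. by case: A => A [x eA]; exists x; apply: sig_ext. Qed.

Lemma vcoset_eq a b : vcoset a = vcoset b <-> K (a * b^-1).
Proof. by rewrite -rcoset_eq; split=> [/(congr1 sval) | eab]; last apply: sig_ext. Qed.

Lemma vcoset_neq g z : ~ K g -> vcoset z <> vcoset (g * z).
Proof.
move=> nKg /vcoset_eq; have -> : z * (g * z)^-1 = g^-1 by gsimpl.
by move/subgroupVr.
Qed.

Lemma index_is_refl : index_is K K 1.
Proof.
pose c1 : rcosets_in K K := exist _ (rcoset K 1) (ex_intro2 _ _ 1 subgroup1 erefl).
exists (fun _ => ord0), (fun _ => c1) => [[A [x Kx eA]] | i]; last by rewrite (ord1 i).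
by apply: sig_ext; rewrite /= eA; apply/rcoset_eq; rewrite mul1g; apply: subgroupV.
Qed.

Lemma index1_subset (M : T -> Prop) (f : rcosets_in M K -> 'I_1) :
  M 1 -> injective f -> subset_of M K.
Proof.
move=> M1 injf x Mx.
pose c y (My : M y) : rcosets_in M K := exist _ (rcoset K y) (ex_intro2 _ _ y My erefl).
have /injf/(congr1 sval)/rcoset_eq : f (c x Mx) = f (c 1 M1).
  by rewrite (ord1 (f (c x Mx))) (ord1 (f (c 1 M1))).
by rewrite invg1 mulg1.
Qed.

End Subgroups.

Lemma pcap_subgroup (T : groupType) (H J : T -> Prop) :
  is_subgroup H -> is_subgroup J -> is_subgroup (pcap H J).
Proof.
move=> sH sJ; split; [|split].
- by split; apply: subgroup1.
- by move=> x y [? ?] [? ?]; split; apply: subgroupM.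
- by move=> x [? ?]; split; apply: subgroupV.
Qed.

Definition cup_rcoset (T : groupType) (H : T -> Prop) (g : T) : T -> Prop :=
  fun m => H m \/ H (m * g^-1).

Section CapConj.
Variables (T : groupType) (H : T -> Prop) (g : T).

(* [capconj] is H ∩ H^g (a ∈ H^g iff g a g^-1 ∈ H) and [capconj_cycle] is
   (H ∩ H^g) ∪ (H ∩ H^g) g, the paper's L = (H ∩ H^g)<g> once g^2 ∈ H. *)
Definition capconj : T -> Prop := fun a => H a /\ H (g * a * g^-1).
Definition capconj_cycle : T -> Prop := fun a => capconj a \/ capconj (a * g^-1).

Lemma capconj_cycle_sub_cup : subset_of capconj_cycle (cup_rcoset H g).
Proof. by move=> m [[Hm _] | [Hm _]]; [left | right]. Qed.

Hypothesis sH : is_subgroup H.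

Lemma capconj_subgroup : is_subgroup capconj.
Proof.
split; [|split].
- by split; rewrite ?mulg1 ?mulgV; apply: subgroup1.
- move=> a b [Ha Hga] [Hb Hgb]; split; first exact: subgroupM.
  have -> : g * (a * b) * g^-1 = (g * a * g^-1) * (g * b * g^-1) by gsimpl.
  exact: subgroupM.
- move=> a [Ha Hga]; split; first exact: subgroupV.
  have -> : g * a^-1 * g^-1 = (g * a * g^-1)^-1 by gsimpl.
  exact: subgroupV.
Qed.

Lemma capconj_cycle_g : capconj_cycle g.
Proof. by right; rewrite mulgV; apply: subgroup1 capconj_subgroup. Qed.

Hypothesis Hgg : H (g * g).

Lemma capconj_sqr : capconj (g * g).
Proof. by split; last have -> : g * (g * g) * g^-1 = g * g by gsimpl. Qed.

Lemma capconj_conj a : capconj a -> capconj (g * a * g^-1).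
Proof.
move=> [Ha Hga]; split => //.
have -> : g * (g * a * g^-1) * g^-1 = (g * g) * a * (g * g)^-1 by gsimpl.
by apply: (subgroupM sH); [apply: (subgroupM sH) | apply: (subgroupV sH)].
Qed.

Lemma capconj_conjV a : capconj a -> capconj (g^-1 * a * g).
Proof.
move=> [Ha Hga]; split; last by have -> : g * (g^-1 * a * g) * g^-1 = a by gsimpl.
have -> : g^-1 * a * g = (g * g)^-1 * (g * a * g^-1) * (g * g) by gsimpl.
by apply: (subgroupM sH) => //; apply: (subgroupM sH); [apply: (subgroupV sH) |].
Qed.

Lemma capconj_cycle_subgroup : is_subgroup capconj_cycle.
Proof.
have sK := capconj_subgroup.
split; [|split].
- by left; apply: subgroup1.
- move=> x y [Kx | Kx] [Ky | Ky].
  + by left; apply: subgroupM.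
  + right; have -> : x * y * g^-1 = x * (y * g^-1) by gsimpl.
    exact: subgroupM.
  + right; have -> : x * y * g^-1 = (x * g^-1) * (g * y * g^-1) by gsimpl.
    by apply: subgroupM => //; apply: capconj_conj.
  + left; have -> : x * y = (x * g^-1) * (g * (y * g^-1) * g^-1) * (g * g) by gsimpl.
    by apply: (subgroupM sK); [apply: subgroupM => //; apply: capconj_conj | apply: capconj_sqr].
- move=> x [Kx | Kx]; [left | right]; first exact: subgroupV.
  have -> : x^-1 * g^-1 = (g^-1 * (x * g^-1)^-1 * g) * (g * g)^-1 by gsimpl.
  by apply: (subgroupM sK); [apply/capconj_conjV/(subgroupV sK) | apply/(subgroupV sK)/capconj_sqr].
Qed.

Lemma prod_set_capconj_cycle :
  prod_set (pcap H (conj_set H g)) (cycle_set g) = capconj_cycle.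
Proof.
have sL := capconj_cycle_subgroup.
have capconjE a : pcap H (conj_set H g) a <-> capconj a.
  split=> -[Ha Hga]; split => //.
  - by case: Hga => h Hh ->; rewrite conjgE; have -> : g * (g^-1 * (h * g)) * g^-1 = h by gsimpl.
  - by exists (g * a * g^-1) => //; rewrite conjgE; gsimpl.
have Lexp n : capconj_cycle (g ^+ n).
  elim: n => [|n IHn]; first by rewrite expg0; apply: subgroup1.
  by rewrite expgS; exact: (subgroupM sL capconj_cycle_g IHn).
apply: pred_ext => z; split.
- case=> k [c [/capconjE Kk [n [-> | ->]] ->]].
  + by apply: (subgroupM sL); [left | apply: Lexp].
  + by apply: (subgroupM sL); [left | apply/(subgroupV sL)/Lexp].
- case=> Kz.
  + by exists z, 1; split; [apply/capconjE | exists 0%N; left | rewrite mulg1].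
  + by exists (z * g^-1), g; split; [apply/capconjE | exists 1%N; left; rewrite expg1 | gsimpl].
Qed.

Hypothesis nHg : ~ H g.

Lemma cup_rcoset_capconj_cycle w :
  cup_rcoset H g w /\ cup_rcoset H g (g * w) <-> capconj_cycle w.
Proof.
split.
- case=> -[Hw | Hw] [Hgw | Hgw].
  + case: nHg; have -> : g = (g * w) * w^-1 by gsimpl.
    by apply: (subgroupM sH) => //; apply: (subgroupV sH).
  + by left.
  + right; split => //.
    have -> : g * (w * g^-1) * g^-1 = (g * w) * (g * g)^-1 by gsimpl.
    by apply: (subgroupM sH) => //; apply: (subgroupV sH).
  + case: nHg; have -> : g = (g * w * g^-1) * (w * g^-1)^-1 by gsimpl.
    by apply: (subgroupM sH) => //; apply: (subgroupV sH).
- case=> -[Hw Hgw].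
  + by split; [left | right].
  + split; first by right.
    left; have -> : g * w = (g * (w * g^-1) * g^-1) * (g * g) by gsimpl.
    exact: subgroupM.
Qed.

Lemma vcoset_pairP a b :
  (vcoset H a = vcoset H b \/ vcoset H a = vcoset H (g * b)) /\
  (vcoset H (g * a) = vcoset H b \/ vcoset H (g * a) = vcoset H (g * b))
  <-> capconj_cycle (a * b^-1).
Proof.
rewrite -cup_rcoset_capconj_cycle /cup_rcoset !vcoset_eq //.
have -> : a * (g * b)^-1 = a * b^-1 * g^-1 by gsimpl.
have -> : g * a * (g * b)^-1 = g * (a * b^-1) * g^-1 by gsimpl.
by have -> : g * a * b^-1 = g * (a * b^-1) by gsimpl.
Qed.

End CapConj.

Lemma ord2_pigeonhole (i j k : 'I_2) : i = j \/ i = k \/ j = k.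
Proof.
suff: (val i == val j) || (val i == val k) || (val j == val k).
  by case/orP => [/orP[] | ] /eqP/val_inj; auto.
by case: i j k => [[|[|i]] Hi] [[|[|j]] Hj] [[|[|k]] Hk].
Qed.

Section IndexTwo.
Variables (T : groupType) (H J : T -> Prop) (g : T).
Hypotheses (sH : is_subgroup H) (sJ : is_subgroup J).
Hypothesis idxJ : index_is J (pcap H J) 2.

Lemma index2_pigeonhole a b c : J a -> J b -> J c ->
  pcap H J (a * b^-1) \/ pcap H J (a * c^-1) \/ pcap H J (b * c^-1).
Proof.
move: idxJ => [f bf] Ja Jb Jc.
pose r x (Jx : J x) : rcosets_in J (pcap H J) :=
  exist _ (rcoset (pcap H J) x) (ex_intro2 _ _ x Jx erefl).
have fP x y Jx Jy : f (r x Jx) = f (r y Jy) -> pcap H J (x * y^-1).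
  by move/(bij_inj bf)/(congr1 sval)/(rcoset_eq (pcap_subgroup sH sJ)).
by case: (ord2_pigeonhole (f (r a Ja)) (f (r b Jb)) (f (r c Jc))) => [/fP | [/fP | /fP]]; auto.
Qed.

Hypotheses (Jg : J g) (nHg : ~ H g).

Lemma index2_sub_cup : subset_of J (cup_rcoset H g).
Proof.
move=> m Jm.
case: (index2_pigeonhole Jm Jg (subgroup1 sJ)) => [[Hmg _] | [[Hm _] | [Hg _]]].
- by right.
- by left; rewrite invg1 mulg1 in Hm.
- by rewrite invg1 mulg1 in Hg.
Qed.

Lemma index2_sqr : pcap H J (g * g).
Proof.
have Jgg : J (g * g) by apply: (subgroupM sJ).
split => //; case: (index2_sub_cup Jgg) => //.
by rewrite mulgK => /nHg.
Qed.

Lemma index2_pcap_sub_capconj : subset_of (pcap H J) (capconj H g).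
Proof.
move=> s [Hs Js]; split => //.
have Jgs : J (g * s * g^-1) by apply: (subgroupM sJ) (subgroupV sJ Jg); apply: (subgroupM sJ).
case: (index2_sub_cup Jgs) => // Hgsg; case: nHg.
have -> : g = (g * s * g^-1 * g^-1) * (g * g) * s^-1 by gsimpl.
apply: (subgroupM sH) (subgroupV sH Hs); apply: (subgroupM sH) Hgsg _.
by case: index2_sqr.
Qed.

Lemma index2_sub_capconj_cycle : subset_of J (capconj_cycle H g).
Proof.
move=> x Jx; case: (index2_sub_cup Jx) => Hx; [left | right];
  apply: index2_pcap_sub_capconj; split => //.
exact: (subgroupM sJ Jx (subgroupV sJ Jg)).
Qed.

End IndexTwo.

Section CosGraph.
Variables (T : groupType) (H M : T -> Prop) (g : T).
Hypotheses (sH : is_subgroup H) (sM : is_subgroup M) (Mg : M g).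
Hypothesis sMcup : subset_of M (cup_rcoset H g).

Lemma Cos_incE (w : cos_vtx H) y :
  @inc (Cos H M) w (vcoset M y) <-> w = vcoset H y \/ w = vcoset H (g * y).
Proof.
have [x ->] := vcoset_surj w; rewrite !vcoset_eq //; split.
- case=> x' [y' [/= /(rcoset_eq sH) Hxx' /(rcoset_eq sM) Myy' [m [h [Mm Hh e]]]]].
  have Mm' : M (m^-1 * (y * y'^-1)^-1) by apply: (subgroupM sM); apply: (subgroupV sM).
  have em : m = y' * x'^-1 * h^-1 by rewrite e mulgK.
  case: (sMcup Mm') => Hm'; [left | right].
  + have -> : x * y^-1 = (x * x'^-1) * h^-1 * (m^-1 * (y * y'^-1)^-1) by rewrite em; gsimpl.
    by apply: (subgroupM sH) Hm'; apply: (subgroupM sH) Hxx' (subgroupV sH Hh).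
  + have -> : x * (g * y)^-1 = (x * x'^-1) * h^-1 * (m^-1 * (y * y'^-1)^-1 * g^-1).
      by rewrite em; gsimpl.
    by apply: (subgroupM sH) Hm'; apply: (subgroupM sH) Hxx' (subgroupV sH Hh).
- case=> Hxy; exists x, y; split => //.
  + exists 1, (y * x^-1); split; first exact: (subgroup1 sM).
    * by have := subgroupV sH Hxy; rewrite invgM invgK.
    * by rewrite mul1g.
  + exists g^-1, (g * y * x^-1); split; first exact: (subgroupV sM Mg).
    * have -> : g * y * x^-1 = (x * (g * y)^-1)^-1 by gsimpl.
      exact: (subgroupV sH Hxy).
    * by gsimpl.
Qed.

Hypothesis nHg : ~ H g.

Lemma Cos_adjacent z : @adjacent (Cos H M) (vcoset H z) (vcoset H (g * z)).
Proof.
split; first exact: vcoset_neq.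
by exists (vcoset M z); rewrite !Cos_incE; split; [left | right].
Qed.

Hypothesis Hgg : H (g * g).

Lemma Cos_adjacentP (u v : cos_vtx H) : @adjacent (Cos H M) u v ->
  exists z, u = vcoset H z /\ v = vcoset H (g * z).
Proof.
move=> [neq [e [ue ve]]]; have [z ez] := vcoset_surj e; subst e.
move: ue ve neq; rewrite !Cos_incE => -[-> | ->] [-> | ->] // _; first by exists z.
exists (g * z); split => //; apply/vcoset_eq => //.
have -> : z * (g * (g * z))^-1 = (g * g)^-1 by gsimpl.
exact: (subgroupV sH Hgg).
Qed.

Lemma Cos_common_edgeP z0 z :
  @inc (Cos H M) (vcoset H z0) (vcoset M z) /\ @inc (Cos H M) (vcoset H (g * z0)) (vcoset M z)
  <-> capconj_cycle H g (z0 * z^-1).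
Proof. by rewrite -vcoset_pairP // !Cos_incE. Qed.

Lemma common_edges_bijective (u v : cos_vtx H) : @adjacent (Cos H M) u v ->
  exists phi : @common_edges (Cos H M) u v -> rcosets_in (capconj_cycle H g) M, bijective phi.
Proof.
move=> /Cos_adjacentP [z0 [-> ->]].
have sL := capconj_cycle_subgroup sH Hgg.
pose R (e : @common_edges (Cos H M) (vcoset H z0) (vcoset H (g * z0)))
       (c : rcosets_in (capconj_cycle H g) M) :=
  exists z, sval e = vcoset M z /\ sval c = rcoset M (z * z0^-1).
have totR e : exists c, R e c.
  case: e => e ee; have [z ez] := vcoset_surj e; subst e.
  have Lz : capconj_cycle H g (z * z0^-1).
    have -> : z * z0^-1 = (z0 * z^-1)^-1 by gsimpl.
    exact/(subgroupV sL)/Cos_common_edgeP.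
  by exists (exist _ (rcoset M (z * z0^-1)) (ex_intro2 _ _ _ Lz erefl)), z.
have surR c : exists e, R e c.
  case: c => A [x Lx eA].
  have ex : @inc (Cos H M) (vcoset H z0) (vcoset M (x * z0)) /\
            @inc (Cos H M) (vcoset H (g * z0)) (vcoset M (x * z0)).
    apply/Cos_common_edgeP; have -> : z0 * (x * z0)^-1 = x^-1 by gsimpl.
    exact: (subgroupV sL Lx).
  by exists (exist _ (vcoset M (x * z0)) ex), (x * z0); rewrite /= eA mulgK.
have shift z z' : z * z0^-1 * (z' * z0^-1)^-1 = z * z'^-1 by gsimpl.
have injR e e' c : R e c -> R e' c -> e = e'.
  move=> [z [ez ec]] [z' [ez' ec']]; apply: sig_ext; rewrite ez ez'.
  by apply/vcoset_eq => //; rewrite -shift; apply/(rcoset_eq sM); rewrite -ec -ec'.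
have funR e c c' : R e c -> R e c' -> c = c'.
  move=> [z [ez ec]] [z' [ez' ec']]; apply: sig_ext; rewrite ec ec'.
  by apply/(rcoset_eq sM); rewrite shift; apply/(vcoset_eq sM); rewrite -ez -ez'.
by have [phi bphi _] := functional_rel_bijective totR surR injR funR; exists phi.
Qed.

End CosGraph.

Section CosCapconjCycle.
Variables (T : groupType) (H : T -> Prop) (g : T).
Hypotheses (sH : is_subgroup H) (nHg : ~ H g) (Hgg : H (g * g)).

Let L := capconj_cycle H g.
Let sL : is_subgroup L := capconj_cycle_subgroup sH Hgg.
Let Lg : L g := capconj_cycle_g g sH.
Let Lcup : subset_of L (cup_rcoset H g) := @capconj_cycle_sub_cup T H g.

Lemma Cos_capconj_cycle_inc_ext : inc_ext (Cos H L).
Proof.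
move=> e1 e2 e12.
have [z1 ez1] := vcoset_surj e1; have [z2 ez2] := vcoset_surj e2; subst e1 e2.
apply/(vcoset_eq sL)/(Cos_common_edgeP sH sL Lg Lcup nHg Hgg).
by split; apply/e12/(Cos_incE sH sL Lg Lcup); [left | right].
Qed.

Lemma Cos_capconj_cycle_SimpCos_iso : graph_iso (Cos H L) (SimpCos H g).
Proof.
have incE := Cos_incE sH sL Lg Lcup.
apply: (@graph_iso_of_inc_ext (Cos H L) (SimpCos H g) id).
- by exists id.
- exact: Cos_capconj_cycle_inc_ext.
- exact: simple_graph_of_inc_ext.
- move=> e; have [z ->] := vcoset_surj e.
  have pf : exists u v : cos_vtx H, [/\ u <> v,
      (exists x y, [/\ sval u = rcoset H x, sval v = rcoset H y & dcoset H g (y * x^-1)]) &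
      (fun w => w = vcoset H z \/ w = vcoset H (g * z)) = (fun w => w = u \/ w = v)].
    exists (vcoset H z), (vcoset H (g * z)); split => //; first exact: vcoset_neq.
    exists z, (g * z); split => //; exists 1, 1; split; try exact: (subgroup1 sH).
    by gsimpl.
  by exists (exist _ _ pf : edg (SimpCos H g)) => w; apply: incE.
- case=> p [u [v [uv [x [y [eu ev [h1 [h2 [Hh1 Hh2 exy]]]]]] ep]]].
  have eu' : u = vcoset H x by apply: sig_ext.
  have ev' : v = vcoset H (g * (h2 * x)).
    apply: sig_ext; rewrite ev; apply/(rcoset_eq sH).
    have ey : y = h1 * g * h2 * x by rewrite -exy mulgVK.
    by have -> : y * (g * (h2 * x))^-1 = h1 by rewrite ey; gsimpl.
  subst u v p; exists (vcoset L (h2 * x)) => w; rewrite incE.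
  suff -> : vcoset H (h2 * x) = vcoset H x by [].
  by apply/(vcoset_eq sH); have -> : h2 * x * x^-1 = h2 by gsimpl.
Qed.

End CosCapconjCycle.

Section IndexTwoCos.
Variables (T : groupType) (H J : T -> Prop) (g : T).
Hypotheses (sH : is_subgroup H) (sJ : is_subgroup J).
Hypotheses (idxJ : index_is J (pcap H J) 2) (Jg : J g) (nHg : ~ H g).

Let L := capconj_cycle H g.
Let Hgg : H (g * g) := (index2_sqr sH sJ idxJ Jg nHg).1.
Let sL : is_subgroup L := capconj_cycle_subgroup sH Hgg.
Let Lg : L g := capconj_cycle_g g sH.
Let Lcup : subset_of L (cup_rcoset H g) := @capconj_cycle_sub_cup T H g.
Let Jcup : subset_of J (cup_rcoset H g) := index2_sub_cup sH sJ idxJ Jg nHg.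

(* A coset Jx with x in L has a representative k in H ∩ H^g (k = x or g^-1 x),
   and Jk |-> (H ∩ J)k embeds L/J into H/(H ∩ J). *)
Lemma index_capconj_cycle_finite n :
  index_is H (pcap H J) n -> exists lam, index_is L J lam.
Proof.
move=> [iota biota].
pose R (c : rcosets_in L J) (d : rcosets_in H (pcap H J)) :=
  exists k, [/\ capconj H g k, sval c = rcoset J k & sval d = rcoset (pcap H J) k].
have totR c : exists d, R c d.
  case: c => A [x Lx eA].
  have [k Kk eJk] : exists2 k, capconj H g k & rcoset J x = rcoset J k.
    case: Lx => Kx; first by exists x.
    exists (g^-1 * x).
      by have := capconj_conjV sH Hgg Kx; have -> : g^-1 * (x * g^-1) * g = g^-1 * x by gsimpl.
    by apply/(rcoset_eq sJ); have -> : x * (g^-1 * x)^-1 = g by gsimpl.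
  have Hk : H k by case: Kk.
  by exists (exist _ (rcoset (pcap H J) k) (ex_intro2 _ _ k Hk erefl)), k; rewrite /= eA.
have [phi Rphi] := rel_choice totR.
have injphi : injective phi.
  move=> c c' ecc'; have [k [_ ec ed]] := Rphi c; have [k' [_ ec' ed']] := Rphi c'.
  apply: sig_ext; rewrite ec ec'; apply/(rcoset_eq sJ).
  have /(rcoset_eq (pcap_subgroup sH sJ)) [] // : rcoset (pcap H J) k = rcoset (pcap H J) k'.
  by rewrite -ed -ed' ecc'.
have [lam [beta bbeta]] := ord_bijective_of_injective (inj_comp (bij_inj biota) injphi).
by exists lam, beta.
Qed.

Lemma Cos_edge_multiplicity lam : index_is L J lam -> edge_multiplicity (Cos H J) lam.
Proof.
move=> [beta bbeta] u v uv.
have [phi bphi] := common_edges_bijective sH sJ Jg Jcup nHg Hgg uv.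
by exists (beta \o phi); apply: bij_comp.
Qed.

Lemma base_Cos_iso : graph_iso (base_graph (Cos H J)) (Cos H L).
Proof.
have incE := Cos_incE sH sL Lg Lcup.
apply: (@graph_iso_of_inc_ext (base_graph (Cos H J)) (Cos H L) id).
- by exists id.
- exact: simple_graph_of_inc_ext.
- exact: Cos_capconj_cycle_inc_ext.
- case=> p [u [v [uv adj ep]]]; subst p.
  have [z [eu ev]] := Cos_adjacentP sH sJ Jg Jcup Hgg adj; subst u v.
  by exists (vcoset L z) => w; rewrite incE.
- move=> e; have [z ->] := vcoset_surj e.
  have pf : exists u v : cos_vtx H, [/\ u <> v, @adjacent (Cos H J) u v &
      (fun w => w = vcoset H z \/ w = vcoset H (g * z)) = (fun w => w = u \/ w = v)].
    exists (vcoset H z), (vcoset H (g * z)); split => //; first exact: vcoset_neq.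
    exact: Cos_adjacent.
  by exists (exist _ _ pf : edg (base_graph (Cos H J))) => w; rewrite incE.
Qed.

Lemma Cos_simpleP : simple_graph (Cos H J) <-> J = L.
Proof.
split=> [simpleJ | eJL].
- have uv := Cos_adjacent sH sJ Jg Jcup nHg 1.
  have [phi [phi' _ phiK]] := common_edges_bijective sH sJ Jg Jcup nHg Hgg uv.
  have [f bf] := simpleJ _ _ uv.
  have LJ := index1_subset sJ (subgroup1 sL) (inj_comp (bij_inj bf) (can_inj phiK)).
  by apply: pred_ext => x; split; [apply: index2_sub_capconj_cycle | apply: LJ].
- by apply: Cos_edge_multiplicity; rewrite -eJL; apply: index_is_refl.
Qed.

End IndexTwoCos.

Theorem theorem1p2 (T : groupType) (H J : T -> Prop) (g : T) :
  is_subgroup H -> is_subgroup J ->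
  (exists x, ~ H x) ->
  index_is J (pcap H J) 2 ->
  (exists n, index_is H (pcap H J) n) ->
  core_free (pcap H J) ->
  J g -> ~ H g ->
  let L := prod_set (pcap H (conj_set H g)) (cycle_set g) in
  [/\ subset_of J L,
      (exists lam, index_is L J lam /\ edge_multiplicity (Cos H J) lam),
      graph_iso (base_graph (Cos H J)) (Cos H L),
      graph_iso (Cos H L) (SimpCos H g) &
      ((simple_graph (Cos H J) <-> J = L) /\
       (J = L -> graph_iso (Cos H J) (SimpCos H g)))].
Proof.
move=> sH sJ _ idxJ [n idxH] _ Jg nHg L.
have [Hgg _] := index2_sqr sH sJ idxJ Jg nHg.
have -> : L = capconj_cycle H g by apply: prod_set_capconj_cycle.
have [lam idxL] := index_capconj_cycle_finite sH sJ idxJ Jg nHg idxH.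
have iso_SimpCos := Cos_capconj_cycle_SimpCos_iso sH nHg Hgg.
split.
- exact: index2_sub_capconj_cycle.
- by exists lam; split; last exact: (Cos_edge_multiplicity sH sJ idxJ Jg nHg idxL).
- exact: base_Cos_iso.
- exact: iso_SimpCos.
- by split; [apply: Cos_simpleP | move=> ->].
Qed.
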